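(* Let $G$ be a topological groupoid and $f\colon T\to G^{(0)}$ a continuous map. (a) If $G$ is proper, then $G[T]$ is proper. (b) If $G[T]$ is proper and $f$ is open and surjective, then $G$ is proper.
   Context: $G[T]=\{(t',t,g)\in(T\times T)\times G: g\in G^{f(t')}_{f(t)}\}$, a subgroupoid of the product of the pair groupoid $T\times T$ (product $(x,y)(y,z)=(x,z)$) with $G$, with the subspace topology; its unit space is $T$. A continuous map is proper if it is closed and has quasi-compact fibres (quasi-compact: every open cover has a finite subcover). A topological groupoid $H$ is proper if $(r,s)\colon H\to H^{(0)}\times H^{(0)}$ is proper. *)

From HB Require Import structures.
From mathcomp Require Import all_boot all_order.
From mathcomp Require Import all_classical topology.
Set Implicit Arguments. Unset Strict Implicit. Unset Printing Implicit Defensive.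
Local Open Scope classical_set_scope.

(* The unit space is a separate topological space X, embedded in G by [tg_u]
   (the embedding is automatically a homeomorphism onto its image since
   tg_r \o tg_u = id with tg_r continuous).  Composition [tg_mul g h] = g h is
   meaningful when tg_s g = tg_r h (arrows go from source to range). *)
Record topGroupoid (G X : topologicalType) := TopGroupoid {
  tg_r : G -> X;
  tg_s : G -> X;
  tg_u : X -> G;
  tg_mul : G -> G -> G;
  tg_inv : G -> G;
  tg_r_u : forall x, tg_r (tg_u x) = x;
  tg_s_u : forall x, tg_s (tg_u x) = x;
  tg_r_mul : forall g h, tg_s g = tg_r h -> tg_r (tg_mul g h) = tg_r g;
  tg_s_mul : forall g h, tg_s g = tg_r h -> tg_s (tg_mul g h) = tg_s h;
  tg_mulA : forall g h k, tg_s g = tg_r h -> tg_s h = tg_r k ->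
     tg_mul g (tg_mul h k) = tg_mul (tg_mul g h) k;
  tg_mul_ul : forall g, tg_mul (tg_u (tg_r g)) g = g;
  tg_mul_ur : forall g, tg_mul g (tg_u (tg_s g)) = g;
  tg_r_inv : forall g, tg_r (tg_inv g) = tg_s g;
  tg_s_inv : forall g, tg_s (tg_inv g) = tg_r g;
  tg_mulV : forall g, tg_mul g (tg_inv g) = tg_u (tg_r g);
  tg_mulVl : forall g, tg_mul (tg_inv g) g = tg_u (tg_s g);
  tg_r_cont : continuous tg_r;
  tg_s_cont : continuous tg_s;
  tg_u_cont : continuous tg_u;
  tg_inv_cont : continuous tg_inv;
  tg_mul_cont : {within [set p : G * G | tg_s p.1 = tg_r p.2],
                  continuous (fun p : G * G => tg_mul p.1 p.2)}
}.

(* Properness of a map h : A -> B restricted to the subspace D of A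
   (with the subspace topology): h|_D is closed (relatively closed subsets of
   D have closed image) and has quasi-compact fibres.  Compactness of a
   subset of D in the subspace topology coincides with [compact] in A. *)
Definition proper_on (A B : topologicalType) (D : set A) (h : A -> B) : Prop :=
  (forall C : set A, (exists F : set A, closed F /\ C = D `&` F) ->
      closed (h @` C)) /\
  (forall b : B, compact (D `&` h @^-1` [set b])).

Definition proper_groupoid (G X : topologicalType) (Gr : topGroupoid G X) : Prop :=
  proper_on setT (fun g : G => (tg_r Gr g, tg_s Gr g)).

(* Arrow space of the pullback groupoid G[T] = {(t',t,g) | g in G^{f t'}_{f t}}
   as a subspace of (T x T) x G.  Its unit space is T, with range and source
   maps (t',t,g) |-> t' and (t',t,g) |-> t respectively. *)
Definition pullback_arrows (G X T : topologicalType) (Gr : topGroupoid G X)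
  (f : T -> X) : set ((T * T) * G) :=
  [set p | tg_r Gr p.2 = f p.1.1 /\ tg_s Gr p.2 = f p.1.2].

Definition proper_pullback (G X T : topologicalType) (Gr : topGroupoid G X)
  (f : T -> X) : Prop :=
  proper_on (pullback_arrows Gr f) (fun p : (T * T) * G => (p.1.1, p.1.2)).

Definition open_map (A B : topologicalType) (h : A -> B) : Prop :=
  forall U : set A, open U -> open (h @` U).

From mathcomp Require Import all_boot all_order.
From mathcomp Require Import all_classical topology.
Set Implicit Arguments. Unset Strict Implicit. Unset Printing Implicit Defensive.
Local Open Scope classical_set_scope.

(** The pullback G[T] is the fibre product of (r, s) : G -> X * X with
f * f : T * T -> X * X, its (r, s) map being the first projection, so both
parts are facts about fibre products P = Z *_B A of a map h : A -> B along a
map phi : Z -> B.  (a) Proper maps are stable under pullback along a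
continuous phi: the fibres of P -> Z are copies of fibres of h, and closedness
follows from the tube lemma applied to a compact fibre of h.  (b) If phi is
open and surjective, properness descends: the fibres of h are images of
fibres of P -> Z under the second projection, and for closed C the
complement of h(C) is the phi-image of an open set. *)

Definition closed_map (A B : topologicalType) (h : A -> B) : Prop :=
  forall C : set A, closed C -> closed (h @` C).

Lemma proper_on_setTP (A B : topologicalType) (h : A -> B) :
  proper_on setT h <-> closed_map h /\ forall b, compact (h @^-1` [set b]).
Proof.
split=> -[hcl hfib]; split.
- by move=> C cC; apply: hcl; exists C; rewrite setTI.
- by move=> b; rewrite -[_ @^-1` _]setTI.
- by move=> _ [F [cF ->]]; rewrite setTI; exact: hcl.
- by move=> b; rewrite setTI.
Qed.

Definition prod_map (A B C D : Type) (f : A -> C) (g : B -> D) (p : A * B) : C * D :=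
  (f p.1, g p.2).

Section ProdMap.
Context {A B C D : topologicalType} (f : A -> C) (g : B -> D).

Lemma prod_map_continuous : continuous f -> continuous g -> continuous (prod_map f g).
Proof.
move=> fc gc p; apply: cvg_pair.
- exact: (continuous_comp (@cvg_fst _ _ _ _ _) (fc _)).
- exact: (continuous_comp (@cvg_snd _ _ _ _ _) (gc _)).
Qed.

Lemma prod_map_surj : (forall c, exists a, f a = c) -> (forall d, exists b, g b = d) ->
  forall p, exists q, prod_map f g q = p.
Proof.
move=> fs gs [c d]; have [[a <-] [b <-]] := (fs c, gs d).
by exists (a, b).
Qed.

Lemma prod_map_open : open_map f -> open_map g -> open_map (prod_map f g).
Proof.
move=> fo go U oU; rewrite openE => _ [[a b] Uab <-].
have [[P Q] /= [+ +] PQU] : nbhs (a, b) U by exact: open_nbhs_nbhs.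
rewrite !nbhsE => -[P' [oP' P'a] P'P] [Q' [oQ' Q'b] Q'Q].
exists (f @` P', g @` Q').
  by split; apply: open_nbhs_nbhs; split;
    [exact: fo | by exists a | exact: go | by exists b].
move=> [c d] /= [[a' P'a' <-] [b' Q'b' <-]].
by exists (a', b') => //; apply: PQU; split; [exact: P'P | exact: Q'Q].
Qed.

End ProdMap.

Lemma tube_lemma (Z Y : topologicalType) (z : Z) (K : set Y) (W : set (Z * Y)) :
  compact K -> open W -> [set z] `*` K `<=` W ->
  exists U V, [/\ nbhs z U, open V, K `<=` V & U `*` V `<=` W].
Proof.
move=> /compact_near_coveringP cK oW zKW.
pose tube_over (U : set Z) (y : Y) :=
  exists2 V, open_nbhs y V & U `*` V `<=` W.
(* Compactness of K as [near_covering], indexed by the filter of sets that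
   are contained in some neighbourhood of z. *)
have : \forall U \near powerset_filter_from (nbhs z), K `<=` tube_over U.
  apply: cK => y Ky.
  have [[P V] /= [nP nV] PVW] : nbhs (z, y) W.
    by apply: open_nbhs_nbhs; split => //; exact: zKW.
  move: nV; rewrite nbhsE => -[V' [oV' V'y] V'V].
  exists (V', [set U | U `<=` P]).
    by split; [exact: open_nbhs_nbhs | exact: small_set_sub].
  move=> [y' U] /= [V'y' UP]; exists V' => //.
  by move=> [u v] [/UP Pu /V'V Vv]; exact: PVW.
rewrite near_powerset_filter_fromP; last first.
  by move=> U U' UU' KU' y /KU' [V nV U'VW]; exists V => // p [/UU' ? ?]; apply: U'VW.
move=> [U nU KU]; exists U, [set y | tube_over U y]; split => //.
- rewrite openE => y [V [oV Vy] UVW]; rewrite /interior.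
  by apply: (filterS _ (open_nbhs_nbhs (conj oV Vy))) => v Vv; exists V.
- by move=> [u v] [Uu [V [_ Vv] UVW]]; exact: UVW.
Qed.

Section FibreProduct.
Context {Z A B : topologicalType} (phi : Z -> B) (h : A -> B).

Definition fibre_product : set (Z * A) := [set p | phi p.1 = h p.2].

Lemma fibre_product_fst_fibreE (z : Z) :
  fibre_product `&` fst @^-1` [set z] = pair z @` (h @^-1` [set phi z]).
Proof.
rewrite eqEsubset; split => [[z' a] [/= eza <-]|_ [a ha <-]] //.
by exists a.
Qed.

Lemma compact_fst_fibre (z : Z) :
  compact (h @^-1` [set phi z]) -> compact (fibre_product `&` fst @^-1` [set z]).
Proof.
move=> cK; rewrite fibre_product_fst_fibreE; apply: continuous_compact cK.
apply: continuous_subspaceT => a; apply: cvg_pair; [exact: cvg_cst | exact: cvg_id].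
Qed.

Lemma compact_fibre_descent (z : Z) :
  compact (fibre_product `&` fst @^-1` [set z]) -> compact (h @^-1` [set phi z]).
Proof.
have -> : h @^-1` [set phi z] = snd @` (fibre_product `&` fst @^-1` [set z]).
  by rewrite fibre_product_fst_fibreE image_comp image_id.
by apply: continuous_compact; apply: continuous_subspaceT => p; exact: cvg_snd.
Qed.

Lemma closed_fst_fibre_product : continuous phi ->
    closed_map h -> (forall b, compact (h @^-1` [set b])) ->
  forall F, closed F -> closed (fst @` (fibre_product `&` F)).
Proof.
move=> phic hcl hfib F cF; rewrite -openC openE => z nSz.
have [U [V [nU oV KV UVW]]] :
    exists U V, [/\ nbhs z U, open V, h @^-1` [set phi z] `<=` V & U `*` V `<=` ~` F].
  apply: tube_lemma (hfib _) (closed_openC cF) _ => -[_ a] [/= -> ha] Fza.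
  by apply: nSz; exists (z, a).
(* The points whose whole h-fibre lies in V: an open set since h is closed. *)
pose N := ~` (h @` ~` V).
have oN : open N by apply/closed_openC/hcl/open_closedC.
have Nphiz : N (phi z) by move=> [a nVa ha]; apply/nVa/KV.
have nN : nbhs z (phi @^-1` N) by apply: phic; exact: open_nbhs_nbhs.
apply: filterS (filterI nU nN) => w [Uu Nu] [[u a] [/= phiua Fua] /= uw]; subst w.
have Va : V a by apply: contrapT => nVa; apply: Nu; exists a.
exact: UVW (u, a) (conj Uu Va) Fua.
Qed.

Lemma closed_map_descent : open_map phi -> (forall b, exists z, phi z = b) ->
    (forall F, closed F -> closed (fst @` (fibre_product `&` F))) ->
  closed_map h.
Proof.
move=> phio phis fcl C cC.
pose S := fst @` (fibre_product `&` snd @^-1` C).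
(* b is in h(C) iff the (nonempty) phi-fibre over b lies in S. *)
have -> : h @` C = ~` (phi @` ~` S).
  rewrite eqEsubset; split=> [_ [a Ca <-] [z nSz phiza]|b nb].
    by apply: nSz; exists (z, a).
  have [z phizb] := phis b.
  have [[z' a] [/= phiza Ca] /= z'z] : S z.
    by apply: contrapT => nSz; apply: nb; exists z.
  by exists a; rewrite // -phiza z'z.
apply/open_closedC/phio/closed_openC/fcl.
exact: (continuous_closedP _).1 (fun p => cvg_snd) _ cC.
Qed.

Lemma proper_fst_fibre_product :
  continuous phi -> proper_on setT h -> proper_on fibre_product fst.
Proof.
move=> phic /proper_on_setTP[hcl hfib]; split=> [_ [F [cF ->]] | z].
  exact: closed_fst_fibre_product.
exact: compact_fst_fibre.
Qed.

Lemma proper_descent : open_map phi -> (forall b, exists z, phi z = b) ->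
  proper_on fibre_product fst -> proper_on setT h.
Proof.
move=> phio phis [fcl ffib]; apply/proper_on_setTP; split.
  by apply: closed_map_descent => // F cF; apply: fcl; exists F.
by move=> b; have [z <-] := phis b; exact: compact_fibre_descent.
Qed.

End FibreProduct.

Theorem proposition2p22 (G X T : topologicalType) (Gr : topGroupoid G X)
  (f : T -> X) (f_cont : continuous f) :
  (proper_groupoid Gr -> proper_pullback Gr f) /\
  (proper_pullback Gr f -> open_map f -> (forall x : X, exists t : T, f t = x) ->
     proper_groupoid Gr).
Proof.
have pullbackE : pullback_arrows Gr f =
    fibre_product (prod_map f f) (fun g => (tg_r Gr g, tg_s Gr g)).
  by apply/seteqP; split=> -[[t' t] g];
    rewrite /pullback_arrows /fibre_product /prod_map /= => -[-> ->].
have fstE : (fun p : (T * T) * G => (p.1.1, p.1.2)) = fst by apply/funext => -[[]].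
rewrite /proper_pullback /proper_groupoid pullbackE fstE; split.
  by apply: proper_fst_fibre_product; exact: prod_map_continuous.
move=> proper_pb f_open f_surj; apply: proper_descent proper_pb.
  exact: prod_map_open.
exact: prod_map_surj.
Qed.
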